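(* Let $F=\langle f_1,\ldots,f_k\rangle$ be a normalized solution to an instance $(\mathcal{T}_{initial},\mathcal{T}_{final},k)$ of Flip Distance, and let $C$ be a component of $\mathcal{D}_F$. Let $f_i$ and $f_h$, with $i<h$, be two flips in $C$ such that $\epsilon(f_i)=\epsilon(f_h)$. Then there is a directed path from $f_i$ to $f_h$ in $C$.
   Context: A triangulation of a finite point set $\mathcal{P}$ in the plane is a partition of the convex hull of $\mathcal{P}$ into triangles whose vertex set is $\mathcal{P}$. For an interior edge $e$ of a triangulation $\mathcal{T}$, the quadrilateral associated with $e$ is the union of the two triangles of $\mathcal{T}$ sharing $e$. A flip $f$ with underlying edge $\epsilon(f)=e$ is admissible in $\mathcal{T}$ if $e\in\mathcal{T}$ and its associated quadrilateral is convex; performing it replaces $e$ by the other diagonal $\phi(f)$ of that quadrilateral. Two distinct edges share a triangle in $\mathcal{T}$ if they are edges of the same triangle of $\mathcal{T}$. A sequence $F=\langle f_1,\ldots,f_r\rangle$ is valid with respect to $\mathcal{T}$ if there are triangulations $\mathcal{T}_0=\mathcal{T},\mathcal{T}_1,\ldots,\mathcal{T}_r$ such that $f_i$ is admissible in $\mathcal{T}_{i-1}$ and performing it yields $\mathcal{T}_i$; then we write $\mathcal{T}\xrightarrow{F}\mathcal{T}_r$. Flips in a sequence are distinct objects even if they have the same underlying edge. For $1\le i<j\le r$, flip $f_j$ is adjacent to $f_i$ (written $f_i\to f_j$) if (1) either $\phi(f_i)=\epsilon(f_j)$ or $\phi(f_i)$ and $\epsilon(f_j)$ share a triangle in $\mathcal{T}_{j-1}$,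 and (2) there is no $p$ with $i<p<j$ and $\epsilon(f_p)=\phi(f_i)$. $\mathcal{D}_F$ is the directed acyclic graph whose nodes are the flips of $F$ and whose arcs are the pairs $f_i\to f_j$; a component of it is a weakly connected component. The flip distance between two triangulations is the minimum length of a valid sequence transforming one into the other. An instance $(\mathcal{T}_{initial},\mathcal{T}_{final},k)$ of Flip Distance consists of two triangulations of $\mathcal{P}$ and $k\in\mathbb{N}$; a solution is a valid sequence $F$ of length $k$ with $\mathcal{T}_{initial}\xrightarrow{F}\mathcal{T}_{final}$, where $k$ is the flip distance between them. For a solution $F=\langle f_1,\ldots,f_k\rangle$, $\mathcal{T}_j$ denotes the outcome of applying $\langle f_1,\ldots,f_j\rangle$ to $\mathcal{T}_{initial}$. A changed edge is an edge of $\mathcal{T}_{initial}$ not in $\mathcal{T}_{final}$; a component of $\mathcal{D}_F$ is essential if it contains a flip whose underlying edge is a changed edge. A solution $F$ is normalized if every component of $\mathcal{D}_F$ is essential and the flips of each component of $\mathcal{D}_F$ appear as a consecutive block in $F$. *)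

(* Points of the plane have coordinates in an arbitrary
   real field R; the point set P is given as an injective map p : 'I_n -> R*R. *)
From mathcomp Require Import all_boot all_order all_algebra.
Set Implicit Arguments. Unset Strict Implicit. Unset Printing Implicit Defensive.
Import Order.TTheory GRing.Theory Num.Theory.
Local Open Scope ring_scope.

Section FlipDefs.
Variables (R : realFieldType) (n : nat) (p : 'I_n -> R * R).

Definition orient (a b c : R * R) : R :=
  (b.1 - a.1) * (c.2 - a.2) - (b.2 - a.2) * (c.1 - a.1).

Definition in_conv (S : {set 'I_n}) (x : R * R) : Prop :=
  exists w : 'I_n -> R,
    [/\ forall i, 0 <= w i,
        forall i, i \notin S -> w i = 0,
        \sum_i w i = 1 &
        x = (\sum_i w i * (p i).1, \sum_i w i * (p i).2)].

Definition in_open (t : {set 'I_n}) (x : R * R) : Prop :=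
  exists w : 'I_n -> R,
    [/\ forall i, i \in t -> 0 < w i,
        forall i, i \notin t -> w i = 0,
        \sum_i w i = 1 &
        x = (\sum_i w i * (p i).1, \sum_i w i * (p i).2)].

Definition triangle (t : {set 'I_n}) : Prop :=
  exists a b c, t = [set a; b; c] /\ orient (p a) (p b) (p c) != 0.

(* A triangulation of P: a set of triangles partitioning conv(P)
   (cover + pairwise disjoint interiors) whose vertex set is P, and
   such that no point of P lies in a triangle other than its vertices
   (so triangles meet edge-to-edge). *)
Definition is_triangulation (T : {set {set 'I_n}}) : Prop :=
  [/\ forall t, t \in T -> triangle t,
      forall x, in_conv setT x <-> exists2 t, t \in T & in_conv t x,
      forall t1 t2, t1 \in T -> t2 \in T -> t1 != t2 ->
        ~ (exists x, in_open t1 x /\ in_open t2 x),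
      forall i, (exists2 t, t \in T & i \in t) &
      forall t i, t \in T -> in_conv t (p i) -> i \in t].

Definition is_edge_of (T : {set {set 'I_n}}) (e : {set 'I_n}) : bool :=
  (#|e| == 2) && [exists t in T, e \subset t].

Definition share_tri (T : {set {set 'I_n}}) (e1 e2 : {set 'I_n}) : bool :=
  (e1 != e2) && [exists t in T, (e1 \subset t) && (e2 \subset t)].

(* The associated quadrilateral is the union
   of the triangles abc and abd sharing e = ab; it is (strictly) convex
   iff c, d are strictly on opposite sides of line ab and a, b strictly on
   opposite sides of line cd. *)
Definition flip_step (T : {set {set 'I_n}}) (e g : {set 'I_n})
    (T' : {set {set 'I_n}}) : Prop :=
  exists a b c d,
    [/\ e = [set a; b], g = [set c; d],
        [set a; b; c] \in T /\ [set a; b; d] \in T,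
        orient (p a) (p b) (p c) * orient (p a) (p b) (p d) < 0 /\
        orient (p c) (p d) (p a) * orient (p c) (p d) (p b) < 0 &
        T' = ((T :\ [set a; b; c]) :\ [set a; b; d])
               :|: [set [set a; c; d]; [set b; c; d]]].

(* A flip is recorded as the pair (epsilon f, phi f). *)
Definition flip := ({set 'I_n} * {set 'I_n})%type.

(* F is valid w.r.t. T0, with intermediate triangulations Ts 0, ..., Ts (size F)
   (flip number j, 0-based, is performed on Ts j and yields Ts j.+1). *)
Definition valid_seq (T0 : {set {set 'I_n}}) (F : seq flip)
    (Ts : nat -> {set {set 'I_n}}) : Prop :=
  [/\ Ts 0 = T0,
      forall j, (j <= size F)%N -> is_triangulation (Ts j) &
      forall j, (j < size F)%N ->
        flip_step (Ts j) (nth (set0, set0) F j).1 (nth (set0, set0) F j).2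
                  (Ts j.+1)].

Definition transforms (T0 : {set {set 'I_n}}) (F : seq flip)
    (T1 : {set {set 'I_n}}) : Prop :=
  exists Ts, valid_seq T0 F Ts /\ Ts (size F) = T1.

Definition is_solution (Tinit Tfinal : {set {set 'I_n}}) (k : nat)
    (F : seq flip) (Ts : nat -> {set {set 'I_n}}) : Prop :=
  [/\ size F = k, valid_seq Tinit F Ts, Ts k = Tfinal &
      forall F', transforms Tinit F' Tfinal -> (k <= size F')%N].

Section DAG.
Variables (F : seq flip) (Ts : nat -> {set {set 'I_n}}).

Definition eps (i : 'I_(size F)) : {set 'I_n} := (nth (set0, set0) F i).1.
Definition phi (i : 'I_(size F)) : {set 'I_n} := (nth (set0, set0) F i).2.

Definition adj : rel 'I_(size F) := fun i j =>
  [&& (i < j)%N,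
      (phi i == eps j) || share_tri (Ts j) (phi i) (eps j) &
      [forall q : 'I_(size F), ((i < q)%N && (q < j)%N) ==> (eps q != phi i)]].

Definition wadj : rel 'I_(size F) := fun i j => adj i j || adj j i.

Definition is_component (C : {set 'I_(size F)}) : Prop :=
  exists x, C = [set y | connect wadj x y].

Definition changed_edge (Tinit Tfinal : {set {set 'I_n}}) (e : {set 'I_n}) :=
  is_edge_of Tinit e && ~~ is_edge_of Tfinal e.

Definition essential (Tinit Tfinal : {set {set 'I_n}})
    (C : {set 'I_(size F)}) : Prop :=
  exists2 j, j \in C & changed_edge Tinit Tfinal (eps j).

Definition consecutive (C : {set 'I_(size F)}) : Prop :=
  forall a b c : 'I_(size F), (a <= b)%N -> (b <= c)%N -> a \in C -> c \in C -> b \in C.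

Definition normalized (Tinit Tfinal : {set {set 'I_n}}) (k : nat) : Prop :=
  is_solution Tinit Tfinal k F Ts /\
  forall C, is_component C -> essential Tinit Tfinal C /\ consecutive C.

Definition dpath_in (C : {set 'I_(size F)}) (i j : 'I_(size F)) : Prop :=
  exists s, [/\ path adj i s, last i s = j & all (fun x => x \in C) (i :: s)].

End DAG.
End FlipDefs.

(* Let f_i flip the edge e = uv, and say an edge meets uv if it is e or properly crosses
   the segment uv.  After f_i, every edge meeting uv in the current triangulation was
   created by a flip reachable from f_i in D_F and has not been flipped since.  Just after
   f_i the only such edge is the new diagonal, since edges of a triangulation do not cross.
   When a later flip creates a diagonal cd of the convex quadrilateral acbd meeting uv,
   either the removed edge ab meets uv, or uv, which contains no point of P in its
   interior, leaves the quadrilateral through one of its sides; that side then meets uv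
   and shares a triangle with ab.  Either way the creator of that edge is adjacent to the
   new flip.  As f_h flips e, f_h is reachable from f_i, and a directed path from f_i
   stays in its weak component C. *)

From mathcomp Require Import all_boot all_order all_algebra ring lra.
Set Implicit Arguments. Unset Strict Implicit. Unset Printing Implicit Defensive.
Import Order.TTheory GRing.Theory Num.Theory.
Local Open Scope ring_scope.

Section Orientation.
Variable R : realFieldType.
Implicit Types (P Q A B C Y Z X u v c d : R * R) (l s t m : R).

Definition lerp l P Q : R * R := ((1-l)*P.1 + l*Q.1, (1-l)*P.2 + l*Q.2).
Definition det2 P Q : R := P.1*Q.2 - P.2*Q.1.
Definition vsub P Q : R * R := (P.1 - Q.1, P.2 - Q.2).
Definition translate Y t P : R * R := (Y.1 + t * P.1, Y.2 + t * P.2).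

Lemma orient_lerp P Q l Y Z :
  orient P Q (lerp l Y Z) = (1 - l) * orient P Q Y + l * orient P Q Z.
Proof. rewrite /orient /lerp /=; ring. Qed.
Lemma orient_translate P Q Y t (V : R * R) :
  orient P Q (translate Y t V) = orient P Q Y + t * det2 (vsub Q P) V.
Proof. rewrite /orient /translate /det2 /vsub /=; ring. Qed.
Lemma orient_rot A B C : orient B C A = orient A B C.
Proof. rewrite /orient; ring. Qed.
Lemma orient_swap12 A B C : orient B A C = - orient A B C.
Proof. rewrite /orient; ring. Qed.
Lemma orient_swap23 A B C : orient A C B = - orient A B C.
Proof. rewrite /orient; ring. Qed.
Lemma orient_aab A B : orient A A B = 0. Proof. rewrite /orient; ring. Qed.
Lemma orient_aba A B : orient A B A = 0. Proof. rewrite /orient; ring. Qed.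
Lemma orient_abb A B : orient A B B = 0. Proof. rewrite /orient; ring. Qed.
Lemma orient_four A B C D : orient B C D - orient A C D + orient A B D - orient A B C = 0.
Proof. rewrite /orient; ring. Qed.
Lemma orient_bary1 A B C Y : Y.1 * orient A B C =
  orient B C Y * A.1 + orient C A Y * B.1 + orient A B Y * C.1.
Proof. rewrite /orient; ring. Qed.
Lemma orient_bary2 A B C Y : Y.2 * orient A B C =
  orient B C Y * A.2 + orient C A Y * B.2 + orient A B Y * C.2.
Proof. rewrite /orient; ring. Qed.
Lemma orient_bary_sum A B C Y : orient B C Y + orient C A Y + orient A B Y = orient A B C.
Proof. rewrite /orient; ring. Qed.

Lemma det2_parallel (d w1 w2 : R * R) :
  d != (0, 0) -> det2 d w1 = 0 -> det2 d w2 = 0 -> det2 w1 w2 = 0.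
Proof.
case: d => d1 d2; case: w1 => x1 y1; case: w2 => x2 y2 /=.
rewrite /det2 /= => hd h1 h2.
have e1 : d1 * (x1*y2 - y1*x2) = 0.
  have -> : d1 * (x1*y2 - y1*x2) = x1 * (d1*y2 - d2*x2) - x2 * (d1*y1 - d2*x1) by ring.
  by rewrite h1 h2; ring.
have e2 : d2 * (x1*y2 - y1*x2) = 0.
  have -> : d2 * (x1*y2 - y1*x2) = y1 * (d1*y2 - d2*x2) - y2 * (d1*y1 - d2*x1) by ring.
  by rewrite h1 h2; ring.
case: (eqVneq d1 0) => [z1|nz1]; last by move/eqP: e1; rewrite mulf_eq0 (negPf nz1) => /eqP.
case: (eqVneq d2 0) => [z2|nz2]; last by move/eqP: e2; rewrite mulf_eq0 (negPf nz2) => /eqP.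
by move: hd; rewrite z1 z2 eqxx.
Qed.

Lemma orient_collinear A B P Q :
  A != B -> orient A B P = 0 -> orient A B Q = 0 -> orient P Q A = 0.
Proof.
move=> hAB hP hQ.
have hd : vsub B A != (0,0).
  apply: contra hAB; case: A B {hP hQ} => a1 a2 [b1 b2].
  rewrite /vsub /= xpair_eqE => /andP[/eqP h1 /eqP h2].
  by apply/eqP; congr pair; [move: h1|move: h2]; move/eqP; rewrite subr_eq0 => /eqP ->.
have h1 : det2 (vsub B A) (vsub Q P) = 0.
  transitivity (orient A B Q - orient A B P); first by rewrite /orient /det2 /vsub /=; ring.
  by rewrite hP hQ subr0.
have h2 : det2 (vsub B A) (vsub A P) = 0.
  transitivity (- orient A B P); first by rewrite /orient /det2 /vsub /=; ring.
  by rewrite hP oppr0.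
rewrite -(det2_parallel hd h1 h2) /orient /det2 /vsub /=; ring.
Qed.

Lemma ratio_in01 (a b : R) : a * b < 0 -> 0 < a / (a - b) < 1.
Proof.
move=> h.
have [[ha hb]|[ha hb]] : (0 < a /\ b < 0) \/ (a < 0 /\ 0 < b).
  case: (ltrgtP a 0) => ha; last by move: h; rewrite ha mul0r ltxx.
  + right; split=>//; case: (ltrgtP b 0) => hb //.
    * by move: h; rewrite ltNge mulr_le0 // ltW.
    * by move: h; rewrite hb mulr0 ltxx.
  + left; split=>//; case: (ltrgtP b 0) => hb //.
    * by move: h; rewrite ltNge mulr_ge0 // ltW.
    * by move: h; rewrite hb mulr0 ltxx.
- have hd : 0 < a - b by lra.
  by rewrite divr_gt0 //= ltr_pdivrMr // mul1r; lra.
- have hd : a - b < 0 by lra.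
  by rewrite ltr_ndivlMr // mul0r ltr_ndivrMr // mul1r; lra.
Qed.

Definition affine_at s (x : R * R) := (1-s)*x.1 + s*x.2.
Definition root_param (x : R * R) := x.1 / (x.1 - x.2).

Lemma affine_at_ge0_between (A B s s' : R) : 0 < A -> 0 <= s -> s <= s' ->
  0 <= (1-s')*A + s'*B -> 0 <= (1-s)*A + s*B.
Proof.
move=> hA hs hss h.
case: (ltrgtP s' 0) => hs'; first lra.
- have e : s' * ((1-s)*A + s*B) = (s'-s)*A + s*((1-s')*A + s'*B) by ring.
  have : 0 <= s' * ((1-s)*A + s*B).
    rewrite e; apply: addr_ge0; apply: mulr_ge0; lra.
  by rewrite pmulr_rge0.
- have -> : s = 0 by lra.
  lra.
Qed.

Lemma root_paramP (x : R * R) :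
  0 < x.1 -> x.2 < 0 -> 0 < root_param x < 1 /\ affine_at (root_param x) x = 0.
Proof.
case: x => A B /= hA hB; split.
  by apply: ratio_in01; rewrite pmulr_rlt0.
rewrite /affine_at /root_param /=; field; lra.
Qed.

Lemma affine_at_ge0 s (x : R * R) : 0 < x.1 -> 0 <= x.2 -> 0 <= s <= 1 -> 0 <= affine_at s x.
Proof.
case: x => A B /= hA hB hs; rewrite /affine_at /=.
by apply: addr_ge0; apply: mulr_ge0; lra.
Qed.

Lemma affine_at_ge0_before_root s (x : R * R) :
  0 < x.1 -> x.2 < 0 -> 0 <= s -> s <= root_param x -> 0 <= affine_at s x.
Proof.
move=> h1 h2 hs hle; have [_ h0] := root_paramP h1 h2.
by apply: (affine_at_ge0_between h1 hs hle); move: h0; rewrite /affine_at => ->.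
Qed.

Lemma first_root (l : seq (R * R)) : all (fun x => 0 < x.1) l -> has (fun x => x.2 < 0) l ->
  exists s, [/\ 0 < s < 1, has (fun x => affine_at s x == 0) l &
                           all (fun x => 0 <= affine_at s x) l].
Proof.
elim: l => [//|x l IH] /= /andP[hx hl] hh.
case hn: (has (fun x => x.2 < 0) l).
- have [s [hs hz ha]] := IH hl hn.
  case: (ltP (x.2) 0) => hx2; last first.
    exists s; split=> //; first by rewrite hz orbT.
    by rewrite ha andbT; apply: affine_at_ge0 => //; lra.
  case: (leP s (root_param x)) => hsx.
    exists s; split=> //; first by rewrite hz orbT.
    by rewrite ha andbT; apply: affine_at_ge0_before_root => //; lra.
  have [hs' h0] := root_paramP hx hx2.
  exists (root_param x); split=> //; first by rewrite h0 eqxx.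
  rewrite h0 lexx /=; apply/allP => y hy.
  move/allP: ha => /(_ y hy) hv; move/allP: hl => /(_ y hy) hy1.
  by apply: (affine_at_ge0_between hy1 _ (ltW hsx)) => //; lra.
- have hx2 : x.2 < 0 by move: hh; rewrite hn orbF.
  have [hs' h0] := root_paramP hx hx2.
  exists (root_param x); split=> //; first by rewrite h0 eqxx.
  rewrite h0 lexx /=; apply/allP => y hy.
  move/allP: hl => /(_ y hy) hy1.
  have hy2 : 0 <= y.2 by rewrite leNgt; apply/negP => hy2; move/hasP: hn; apply; exists y.
  by apply: affine_at_ge0 => //; lra.
Qed.

Lemma vertex_of_two_lines A0 A1 A2 Z :
  orient A0 A1 Z = 0 -> orient A1 A2 Z = 0 -> orient A0 A1 A2 != 0 -> Z = A1.
Proof.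
move=> h0 h1 hD.
have hs := orient_bary_sum A0 A1 A2 Z; rewrite h0 h1 add0r addr0 in hs.
have e1 := orient_bary1 A0 A1 A2 Z; have e2 := orient_bary2 A0 A1 A2 Z.
rewrite h0 h1 hs !mul0r add0r addr0 mulrC in e1.
rewrite h0 h1 hs !mul0r add0r addr0 mulrC in e2.
rewrite [Z]surjective_pairing [A1]surjective_pairing.
by congr (_, _); apply: (mulfI hD).
Qed.

Lemma in_open_side A0 A1 A2 A3 Z :
  orient A1 A2 Z = 0 -> 0 < orient A0 A1 Z -> 0 < orient A2 A3 Z ->
  0 < orient A0 A1 A2 -> 0 < orient A1 A2 A3 -> exists2 t, 0 < t < 1 & Z = lerp t A1 A2.
Proof.
move=> h0 hl hr c1 c2.
set D := orient A1 A2 A3.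
have hD : D != 0 by rewrite gt_eqF.
have hs := orient_bary_sum A1 A2 A3 Z; rewrite h0 addr0 -/D in hs.
have e1 := orient_bary1 A1 A2 A3 Z; have e2 := orient_bary2 A1 A2 A3 Z.
rewrite h0 mul0r addr0 -/D in e1.
rewrite h0 mul0r addr0 -/D in e2.
have hs' : orient A2 A3 Z = D - orient A3 A1 Z by rewrite -hs; ring.
have eZ : Z = lerp (orient A3 A1 Z / D) A1 A2.
  rewrite {1}[Z]surjective_pairing /lerp /=; congr (_, _); apply: (mulIf hD).
    by rewrite e1 hs'; field.
  by rewrite e2 hs'; field.
exists (orient A3 A1 Z / D) => //.
have hlt : orient A3 A1 Z / D < 1.
  rewrite ltr_pdivrMr // mul1r -hs; lra.
rewrite hlt andbT.
move: hl; rewrite {1}eZ orient_lerp orient_abb mulr0 add0r => hl.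
by move: hl; rewrite pmulr_lgt0.
Qed.

Definition convex_quad A0 A1 A2 A3 := [/\ 0 < orient A0 A1 A2, 0 < orient A1 A2 A3,
  0 < orient A2 A3 A0 & 0 < orient A3 A0 A1].
Lemma convex_quad_rot A0 A1 A2 A3 : convex_quad A0 A1 A2 A3 -> convex_quad A1 A2 A3 A0.
Proof. by case. Qed.

Lemma on_side_cases A0 A1 A2 A3 Z : convex_quad A0 A1 A2 A3 -> orient A1 A2 Z = 0 ->
  0 <= orient A0 A1 Z -> 0 <= orient A2 A3 Z ->
  [\/ Z = A1, Z = A2 | exists2 t, 0 < t < 1 & Z = lerp t A1 A2].
Proof.
case=> c0 c1 c2 c3 hz hl hr.
case: (ltrgtP (orient A0 A1 Z) 0) hl => hl0 // _; last first.
  by constructor 1; apply: (vertex_of_two_lines hl0 hz); rewrite gt_eqF.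
case: (ltrgtP (orient A2 A3 Z) 0) hr => hr0 // _; last first.
  by constructor 2; apply: (vertex_of_two_lines hz hr0); rewrite gt_eqF.
by constructor 3; apply: (in_open_side hz hl0 hr0).
Qed.

Definition crossing u v c d :=
  orient u v c * orient u v d < 0 /\ orient c d u * orient c d v < 0.

Lemma crossing_of_meet P Q u v X t l m : 0 < t < 1 -> 0 < l < 1 -> u != v ->
  lerp t P Q = lerp l u v -> X = lerp m u v -> orient P Q X != 0 -> crossing u v P Q.
Proof.
move=> ht hl huv eZ eX hX.
have z1 : orient P Q (lerp t P Q) = 0 by rewrite orient_lerp orient_aba orient_abb; ring.
have z2 : orient u v (lerp l u v) = 0 by rewrite orient_lerp orient_aba orient_abb; ring.
rewrite eZ orient_lerp in z1; rewrite -eZ orient_lerp in z2.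
have hu : orient P Q u != 0.
  apply: contra hX => /eqP h0; rewrite h0 mulr0 add0r in z1.
  have h1 : orient P Q v = 0 by move/eqP: z1; rewrite mulf_eq0 gt_eqF ?(andP hl).1 //= => /eqP.
  by rewrite eX orient_lerp h0 h1; apply/eqP; ring.
have hP : orient u v P != 0.
  apply/negP => /eqP h0; rewrite h0 mulr0 add0r in z2.
  have h1 : orient u v Q = 0 by move/eqP: z2; rewrite mulf_eq0 gt_eqF ?(andP ht).1 //= => /eqP.
  by rewrite (orient_collinear huv h0 h1) eqxx in hu.
split.
- have e : t * (orient u v P * orient u v Q) = - (1-t) * orient u v P ^+ 2.
    have hQ : t * orient u v Q = - ((1-t) * orient u v P) by lra.
    by rewrite mulrCA hQ expr2; ring.
  have : t * (orient u v P * orient u v Q) < 0.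
    rewrite e mulNr oppr_lt0; apply: mulr_gt0; first lra.
    by rewrite lt0r sqrf_eq0 hP /= sqr_ge0.
  by rewrite pmulr_rlt0 //; case/andP: ht.
- have e : l * (orient P Q u * orient P Q v) = - (1-l) * orient P Q u ^+ 2.
    have hQ : l * orient P Q v = - ((1-l) * orient P Q u) by lra.
    by rewrite mulrCA hQ expr2; ring.
  have : l * (orient P Q u * orient P Q v) < 0.
    rewrite e mulNr oppr_lt0; apply: mulr_gt0; first lra.
    by rewrite lt0r sqrf_eq0 hu /= sqr_ge0.
  by rewrite pmulr_rlt0 //; case/andP: hl.
Qed.

Lemma quad_exit P0 P1 P2 P3 X (U : R * R) : convex_quad P0 P1 P2 P3 ->
  0 < orient P0 P1 X -> 0 < orient P1 P2 X -> 0 < orient P2 P3 X -> 0 < orient P3 P0 X ->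
  [/\ 0 <= orient P0 P1 U, 0 <= orient P1 P2 U, 0 <= orient P2 P3 U & 0 <= orient P3 P0 U]
  \/ exists2 s, 0 < s < 1 &
    ([\/ lerp s X U = P0, lerp s X U = P1, lerp s X U = P2 | lerp s X U = P3] \/
     exists2 t, 0 < t < 1 & [\/ lerp s X U = lerp t P0 P1, lerp s X U = lerp t P1 P2,
                               lerp s X U = lerp t P2 P3 | lerp s X U = lerp t P3 P0]).
Proof.
move=> hc g0 g1 g2 g3.
case: (boolP [&& 0 <= orient P0 P1 U, 0 <= orient P1 P2 U, 0 <= orient P2 P3 U
                 & 0 <= orient P3 P0 U]); first by case/and4P=> *; left; split.
rewrite !negb_and -!ltNge => hn; right.
have := @first_root [:: (orient P0 P1 X, orient P0 P1 U); (orient P1 P2 X, orient P1 P2 U);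
   (orient P2 P3 X, orient P2 P3 U); (orient P3 P0 X, orient P3 P0 U)].
rewrite /= g0 g1 g2 g3 orbF /=.
case/(_ isT hn) => s [hs hz ha]; exists s => //.
rewrite /affine_at /= -!orient_lerp !andbT in hz ha; rewrite orbF in hz.
case/and4P: ha => a0 a1 a2 a3.
have hc1 := convex_quad_rot hc; have hc2 := convex_quad_rot hc1; have hc3 := convex_quad_rot hc2.
case/or4P: hz => /eqP hz.
- by case: (on_side_cases hc3 hz a3 a1) => [->|->|[t ht ->]];
    [left; constructor 1|left; constructor 2|right; exists t => //; constructor 1].
- by case: (on_side_cases hc hz a0 a2) => [->|->|[t ht ->]];
    [left; constructor 2|left; constructor 3|right; exists t => //; constructor 2].
- by case: (on_side_cases hc1 hz a1 a3) => [->|->|[t ht ->]];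
    [left; constructor 3|left; constructor 4|right; exists t => //; constructor 3].
- by case: (on_side_cases hc2 hz a2 a0) => [->|->|[t ht ->]];
    [left; constructor 4|left; constructor 1|right; exists t => //; constructor 4].
Qed.

Lemma lerp_lerpl s l P Q : lerp s (lerp l P Q) P = lerp ((1-s) * l) P Q.
Proof. by rewrite /lerp /=; congr (_, _); ring. Qed.
Lemma lerp_lerpr s l P Q : lerp s (lerp l P Q) Q = lerp ((1-s) * l + s) P Q.
Proof. by rewrite /lerp /=; congr (_, _); ring. Qed.
Lemma crossing_swapr (u v c d : R * R) : crossing u v c d -> crossing u v d c.
Proof.
case=> h1 h2; split; first by rewrite mulrC.
by rewrite (orient_swap12 c d u) (orient_swap12 c d v) mulrNN.
Qed.
Lemma crossing_swapl (u v c d : R * R) : crossing u v c d -> crossing v u c d.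
Proof.
case=> h1 h2; split; last by rewrite mulrC.
by rewrite (orient_swap12 u v c) (orient_swap12 u v d) mulrNN.
Qed.
Lemma div_ge0_of_mul (x D : R) : D != 0 -> 0 <= x * D -> 0 <= x / D.
Proof.
move=> hD h; have -> : x / D = (x * D) / (D ^+ 2) by field.
by apply: divr_ge0 => //; apply: sqr_ge0.
Qed.

Lemma div_gt0_of_mul (x D : R) : D != 0 -> 0 < x * D -> 0 < x / D.
Proof.
move=> hD h; have -> : x / D = (x * D) / (D ^+ 2) by field.
by apply: divr_gt0 => //; rewrite lt0r sqrf_eq0 hD sqr_ge0.
Qed.

Lemma crossing_point (u v c d : R * R) :
  orient c d u - orient c d v != 0 ->
  lerp (orient c d u / (orient c d u - orient c d v)) u v =
  lerp (orient u v c / (orient u v c - orient u v d)) c d.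
Proof.
move=> h.
have h' : orient u v c - orient u v d != 0.
  have -> : orient u v c - orient u v d = - (orient c d u - orient c d v) by rewrite /orient; ring.
  by rewrite oppr_eq0.
move: h h'; rewrite /lerp /orient.
case: u => u1 u2; case: v => v1 v2; case: c => c1 c2; case: d => d1 d2 /= h h'.
by congr (_, _); field; rewrite ?h ?h'.
Qed.

Lemma mul_lt0_neq0 (x y : R) : x * y < 0 -> x != 0 /\ y != 0.
Proof. by move=> h; split; apply/negP => /eqP e; move: h; rewrite e ?mul0r ?mulr0 ltxx. Qed.

Lemma sqr_gt0 (x : R) : x != 0 -> 0 < x * x.
Proof. by move=> h; rewrite lt0r mulf_eq0 negb_or h /= -expr2 sqr_ge0. Qed.

Lemma common_side_direction (u v c d : R * R) (D1 D2 : R) :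
  orient c d u - orient c d v != 0 -> D1 != 0 -> D2 != 0 ->
  exists V, 0 < det2 (vsub v u) V * D1 /\ 0 < det2 (vsub d c) V * D2.
Proof.
move=> hK h1 h2; set K := orient c d u - orient c d v.
pose V := (- D2 * K * (v.1 - u.1) + D1 * K * (d.1 - c.1),
           - D2 * K * (v.2 - u.2) + D1 * K * (d.2 - c.2)).
exists V; rewrite (_ : det2 (vsub v u) V * D1 = D1 * D1 * (K * K)); last first.
  by rewrite /V /K /det2 /vsub /orient /=; ring.
rewrite (_ : det2 (vsub d c) V * D2 = D2 * D2 * (K * K)); last first.
  by rewrite /V /K /det2 /vsub /orient /=; ring.
by split; apply: mulr_gt0; apply: sqr_gt0.
Qed.

Lemma quad_crossing_point A B C D (U V : R * R) :
  0 < orient A B C -> orient A B D < 0 -> orient C D A * orient C D B < 0 ->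
  crossing U V C D ->
  convex_quad A D B C /\ exists2 l, 0 < l < 1 &
    [/\ 0 < orient A D (lerp l U V), 0 < orient D B (lerp l U V),
        0 < orient B C (lerp l U V) & 0 < orient C A (lerp l U V)].
Proof.
move=> hc hd hcd [cr1 cr2].
have e4 := orient_four A B C D.
have ea : orient C D A = orient A C D by rewrite /orient; ring.
have eb : orient C D B = orient B C D by rewrite /orient; ring.
rewrite ea eb in hcd.
have [hacd hbcd] : orient A C D < 0 /\ 0 < orient B C D by nra.
have eADB : orient A D B = - orient A B D by rewrite /orient; ring.
have eDBC : orient D B C = orient B C D by rewrite /orient; ring.
have eBCA : orient B C A = orient A B C by rewrite /orient; ring.
have eCAD : orient C A D = - orient A C D by rewrite /orient; ring.
have eADC : orient A D C = - orient A C D by rewrite /orient; ring.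
split; first by split; rewrite ?eADB ?eDBC ?eBCA ?eCAD; lra.
have hK : orient C D U - orient C D V != 0.
  by rewrite subr_eq0; apply/negP => /eqP e; move: cr2; rewrite e ltNge -expr2 sqr_ge0.
exists (orient C D U / (orient C D U - orient C D V)); first exact: ratio_in01.
rewrite crossing_point //; set m := orient U V C / _.
have /andP[m0 m1] : 0 < m < 1 := ratio_in01 cr1.
rewrite !orient_lerp !orient_aba !orient_abb eADC eDBC eCAD !mulr0 !addr0 !add0r.
by split; apply: mulr_gt0; lra.
Qed.

End Orientation.

Section SmallEnough.
Variable R : realFieldType.

Definition small_enough (P : R -> Prop) :=
  exists2 d0 : R, 0 < d0 & forall d, 0 < d -> d <= d0 -> P d.

Lemma small_enough_pos (A B : R) : 0 < A -> small_enough (fun d => 0 < A + d * B).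
Proof.
move=> hA; have hB : 0 < `|B| + 1 by rewrite ltr_wpDl.
exists (A / (`|B| + 1)); first exact: divr_gt0.
move=> d hd; rewrite ler_pdivlMr // => hle.
have h1 : - `|B| <= B := lerNnormlW (lexx _).
have h2 : 0 <= `|B| := normr_ge0 _.
nra.
Qed.

Lemma small_enough_and P Q :
  small_enough P -> small_enough Q -> small_enough (fun d => P d /\ Q d).
Proof.
move=> [d0 h0 hP] [d1 h1 hQ].
case: (leP d0 d1) => h.
- exists d0 => // d hd hle; split; [exact: hP | apply: hQ => //; exact: le_trans hle h].
- exists d1 => // d hd hle; split; [apply: hP => //; exact: le_trans hle (ltW h) | exact: hQ].
Qed.

Lemma small_enough_ex P : small_enough P -> exists2 d, 0 < d & P d.
Proof. by case=> d0 h0 hP; exists d0 => //; apply: hP. Qed.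
End SmallEnough.

Section Triangulations.
Variables (R : realFieldType) (n : nat) (p : 'I_n -> R * R).
Implicit Types (a b c d u v w : 'I_n) (T : {set {set 'I_n}}).

Lemma orient_neq0_distinct a b c :
  orient (p a) (p b) (p c) != 0 -> [/\ a != b, b != c & a != c].
Proof.
move=> h; split; apply/negP => /eqP e; move: h; rewrite e.
- by rewrite orient_aab eqxx.
- by rewrite orient_abb eqxx.
- by rewrite orient_aba eqxx.
Qed.

Lemma sum_set3 a b c (F : 'I_n -> R) : a != b -> b != c -> a != c ->
  (forall i, i \notin [set a; b; c] -> F i = 0) -> \sum_i F i = F a + F b + F c.
Proof.
move=> hab hbc hac h.
rewrite (bigD1 a) //= (bigD1 b) //=; last by rewrite eq_sym.
rewrite (bigD1 c) //=; last by rewrite (eq_sym c a) hac eq_sym.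
rewrite big1 ?addr0 ?addrA // => i /andP[/andP [hia hib] hic].
by apply: h; rewrite !inE !negb_or hia hib hic.
Qed.

Definition bary_weights a b c (Y : R * R) (i : 'I_n) : R :=
  let D := orient (p a) (p b) (p c) in
  if i == a then orient (p b) (p c) Y / D else if i == b then orient (p c) (p a) Y / D
  else if i == c then orient (p a) (p b) Y / D else 0.

Lemma bary_weightsP a b c Y : orient (p a) (p b) (p c) != 0 ->
  [/\ forall i, i \notin [set a; b; c] -> bary_weights a b c Y i = 0,
      bary_weights a b c Y a = orient (p b) (p c) Y / orient (p a) (p b) (p c),
      bary_weights a b c Y b = orient (p c) (p a) Y / orient (p a) (p b) (p c),
      bary_weights a b c Y c = orient (p a) (p b) Y / orient (p a) (p b) (p c) &
      [/\ \sum_i bary_weights a b c Y i = 1,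
          Y.1 = \sum_i bary_weights a b c Y i * (p i).1 &
          Y.2 = \sum_i bary_weights a b c Y i * (p i).2]].
Proof.
move=> hD; have [hab hbc hac] := orient_neq0_distinct hD.
have h0 : forall i, i \notin [set a; b; c] -> bary_weights a b c Y i = 0.
  move=> i; rewrite /bary_weights; case: ifP => [/eqP->|_]; first by rewrite !inE eqxx.
  case: ifP => [/eqP->|_]; first by rewrite !inE eqxx orbT.
  by case: ifP => [/eqP->|_]; first by rewrite !inE eqxx !orbT.
have ha : bary_weights a b c Y a = orient (p b) (p c) Y / orient (p a) (p b) (p c).
  by rewrite /bary_weights eqxx.
have hb : bary_weights a b c Y b = orient (p c) (p a) Y / orient (p a) (p b) (p c).
  by rewrite /bary_weights eqxx eq_sym (negPf hab).
have hc : bary_weights a b c Y c = orient (p a) (p b) Y / orient (p a) (p b) (p c).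
  by rewrite /bary_weights eqxx (eq_sym c a) (negPf hac) (eq_sym c b) (negPf hbc).
split=> //; split.
- rewrite (sum_set3 hab hbc hac h0) ha hb hc -(orient_bary_sum (p a) (p b) (p c) Y); field.
  by rewrite orient_bary_sum.
- rewrite (sum_set3 hab hbc hac) ?ha ?hb ?hc; last by move=> i /h0 ->; rewrite mul0r.
  apply: (mulIf hD); rewrite orient_bary1; field.
  exact: hD.
- rewrite (sum_set3 hab hbc hac) ?ha ?hb ?hc; last by move=> i /h0 ->; rewrite mul0r.
  apply: (mulIf hD); rewrite orient_bary2; field.
  exact: hD.
Qed.

Lemma in_set3P (i a b c : 'I_n) : i \in [set a; b; c] -> [\/ i = a, i = b | i = c].
Proof. by rewrite !inE => /orP[/orP[]|] /eqP ->; [constructor 1|constructor 2|constructor 3]. Qed.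

Lemma in_conv_triangle a b c (Y : R * R) : orient (p a) (p b) (p c) != 0 ->
  0 <= orient (p a) (p b) Y * orient (p a) (p b) (p c) ->
  0 <= orient (p b) (p c) Y * orient (p a) (p b) (p c) ->
  0 <= orient (p c) (p a) Y * orient (p a) (p b) (p c) -> in_conv p [set a; b; c] Y.
Proof.
move=> hD h1 h2 h3; have [h0 ha hb hc [hs e1 e2]] := bary_weightsP Y hD.
exists (bary_weights a b c Y); split => //; last by rewrite -e1 -e2; case: (Y).
move=> i; case: (boolP (i \in [set a; b; c])) => hi; last by rewrite h0.
case: (in_set3P hi) => ->; [rewrite ha|rewrite hb|rewrite hc]; exact: div_ge0_of_mul.
Qed.

Lemma in_open_triangle a b c (Y : R * R) : orient (p a) (p b) (p c) != 0 ->
  0 < orient (p a) (p b) Y * orient (p a) (p b) (p c) ->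
  0 < orient (p b) (p c) Y * orient (p a) (p b) (p c) ->
  0 < orient (p c) (p a) Y * orient (p a) (p b) (p c) -> in_open p [set a; b; c] Y.
Proof.
move=> hD h1 h2 h3; have [h0 ha hb hc [hs e1 e2]] := bary_weightsP Y hD.
exists (bary_weights a b c Y); split => //; last by rewrite -e1 -e2; case: (Y).
move=> i hi.
case: (in_set3P hi) => ->; [rewrite ha|rewrite hb|rewrite hc]; exact: div_gt0_of_mul.
Qed.

Lemma triangle_vertex T a b c u : is_triangulation p T -> [set a; b; c] \in T ->
  orient (p a) (p b) (p c) != 0 ->
  0 <= orient (p a) (p b) (p u) * orient (p a) (p b) (p c) ->
  0 <= orient (p b) (p c) (p u) * orient (p a) (p b) (p c) ->
  0 <= orient (p c) (p a) (p u) * orient (p a) (p b) (p c) -> u \in [set a; b; c].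
Proof.
case=> _ _ _ _ hT ht hD h1 h2 h3; apply: hT ht _.
exact: in_conv_triangle.
Qed.

Lemma set3_eq (a b c a' b' c' : 'I_n) :
  (forall i, (i == a) || (i == b) || (i == c) = (i == a') || (i == b') || (i == c')) ->
  [set a; b; c] = [set a'; b'; c'].
Proof. by move=> h; apply/setP => i; rewrite !inE h. Qed.

Lemma triangle_through T t a b :
  is_triangulation p T -> t \in T -> a \in t -> b \in t -> a != b ->
  exists c, t = [set a; b; c] /\ orient (p a) (p b) (p c) != 0.
Proof.
case=> hT _ _ _ _ ht; have [a' [b' [c' [-> hD]]]] := hT t ht.
move=> ha hb hab.
case: (in_set3P ha) hab => ->; case: (in_set3P hb) => -> hab; try by rewrite eqxx in hab.
- by exists c'.
- exists b'; split; last by rewrite orient_swap23 oppr_eq0.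
  by apply: set3_eq => i; case: (i == a'); case: (i == b'); case: (i == c').
- exists c'; split; last by rewrite orient_swap12 oppr_eq0.
  by apply: set3_eq => i; case: (i == a'); case: (i == b'); case: (i == c').
- exists a'; split; last by rewrite orient_rot.
  by apply: set3_eq => i; case: (i == a'); case: (i == b'); case: (i == c').
- exists b'; split; last by rewrite -orient_rot.
  by apply: set3_eq => i; case: (i == a'); case: (i == b'); case: (i == c').
- exists a'; split; last by rewrite orient_swap12 orient_rot oppr_eq0.
  by apply: set3_eq => i; case: (i == a'); case: (i == b'); case: (i == c').
Qed.

(* Both triangles contain [translate x d V] for small enough [d > 0]. *)
Lemma overlapping_triangles T a1 b1 c1 a2 b2 c2 (x V : R * R) (l1 l2 : R) :
  is_triangulation p T -> [set a1; b1; c1] \in T -> [set a2; b2; c2] \in T ->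
  [set a1; b1; c1] != [set a2; b2; c2] ->
  orient (p a1) (p b1) (p c1) != 0 -> orient (p a2) (p b2) (p c2) != 0 ->
  0 < l1 < 1 -> x = lerp l1 (p a1) (p b1) -> 0 < l2 < 1 -> x = lerp l2 (p a2) (p b2) ->
  0 < det2 (vsub (p b1) (p a1)) V * orient (p a1) (p b1) (p c1) ->
  0 < det2 (vsub (p b2) (p a2)) V * orient (p a2) (p b2) (p c2) -> False.
Proof.
move=> hT ht1 ht2 hne hD1 hD2 hl1 ex1 hl2 ex2 hK1 hK2.
set D1 := orient (p a1) (p b1) (p c1) in hD1 hK1.
set D2 := orient (p a2) (p b2) (p c2) in hD2 hK2.
have q1 : 0 < D1 * D1 by rewrite lt0r mulf_eq0 negb_or hD1 /= -expr2 sqr_ge0.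
have q2 : 0 < D2 * D2 by rewrite lt0r mulf_eq0 negb_or hD2 /= -expr2 sqr_ge0.
case/andP: hl1 => l1a l1b; case/andP: hl2 => l2a l2b.
have s1 : 0 < (1 - l1) * (D1 * D1) by apply: mulr_gt0; lra.
have s2 : 0 < l1 * (D1 * D1) by apply: mulr_gt0.
have s3 : 0 < (1 - l2) * (D2 * D2) by apply: mulr_gt0; lra.
have s4 : 0 < l2 * (D2 * D2) by apply: mulr_gt0.
have [d hd [[[g1 g2] g3] g4]] := small_enough_ex (small_enough_and (small_enough_and
   (small_enough_and (small_enough_pos (det2 (vsub (p c1) (p b1)) V * D1) s1)
                     (small_enough_pos (det2 (vsub (p a1) (p c1)) V * D1) s2))
   (small_enough_pos (det2 (vsub (p c2) (p b2)) V * D2) s3))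
   (small_enough_pos (det2 (vsub (p a2) (p c2)) V * D2) s4)).
case: hT => _ _ hdis _ _.
apply: (hdis _ _ ht1 ht2 hne); exists (translate x d V); split.
- apply: in_open_triangle => //;
    rewrite !orient_translate ex1 !orient_lerp ?orient_aba ?orient_abb -/D1.
  + by rewrite (_ : _ * D1 = d * (det2 (vsub (p b1) (p a1)) V * D1)); [apply: mulr_gt0|ring].
  + by rewrite (orient_rot (p a1) (p b1) (p c1)) -/D1; lra.
  + by rewrite (orient_rot (p b1) (p c1) (p a1)) (orient_rot (p a1) (p b1) (p c1)) -/D1; lra.
- apply: in_open_triangle => //;
    rewrite !orient_translate ex2 !orient_lerp ?orient_aba ?orient_abb -/D2.
  + by rewrite (_ : _ * D2 = d * (det2 (vsub (p b2) (p a2)) V * D2)); [apply: mulr_gt0|ring].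
  + by rewrite (orient_rot (p a2) (p b2) (p c2)) -/D2; lra.
  + by rewrite (orient_rot (p b2) (p c2) (p a2)) (orient_rot (p a2) (p b2) (p c2)) -/D2; lra.
Qed.

Lemma edges_not_crossing T u v c d : is_triangulation p T ->
  is_edge_of T [set u; v] -> is_edge_of T [set c; d] -> ~ crossing (p u) (p v) (p c) (p d).
Proof.
move=> hT /andP[_ /existsP[t1 /andP[ht1 s1]]] /andP[_ /existsP[t2 /andP[ht2 s2]]] [cr1 cr2].
have hu := subsetP s1 u (set21 u v); have hv := subsetP s1 v (set22 u v).
have hc := subsetP s2 c (set21 c d); have hd := subsetP s2 d (set22 c d).
have [nc nd] := mul_lt0_neq0 cr1; have [nu nv] := mul_lt0_neq0 cr2.
have huv : u != v.
  by apply/negP => /eqP e; move: cr2; rewrite e ltNge -expr2 sqr_ge0.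
have hcd : c != d.
  by apply/negP => /eqP e; move: cr1; rewrite e ltNge -expr2 sqr_ge0.
have [w1 [et1 hD1]] := triangle_through hT ht1 hu hv huv.
have [w2 [et2 hD2]] := triangle_through hT ht2 hc hd hcd.
have hne : t1 != t2.
  apply/negP => /eqP e; move: hc hd; rewrite -e et1.
  have ncu : c != u by apply/negP => /eqP e'; move: nc; rewrite e' orient_aba eqxx.
  have ncv : c != v by apply/negP => /eqP e'; move: nc; rewrite e' orient_abb eqxx.
  have ndu : d != u by apply/negP => /eqP e'; move: nd; rewrite e' orient_aba eqxx.
  have ndv : d != v by apply/negP => /eqP e'; move: nd; rewrite e' orient_abb eqxx.
  case/in_set3P => ec; rewrite ?ec ?eqxx // in ncu ncv.
  case/in_set3P => ed; rewrite ?ed ?eqxx // in ndu ndv.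
  by move: hcd; rewrite ec ed eqxx.
have hK : orient (p c) (p d) (p u) - orient (p c) (p d) (p v) != 0.
  by rewrite subr_eq0; apply/negP => /eqP e; move: cr2; rewrite e ltNge -expr2 sqr_ge0.
have [V [k1 k2]] := common_side_direction hK hD1 hD2.
rewrite et1 et2 in hne ht1 ht2.
by apply: (overlapping_triangles hT ht1 ht2 hne hD1 hD2 _ erefl _ (crossing_point hK) k1 k2);
  apply: ratio_in01.
Qed.

Definition segment_free u v := forall w (l : R), 0 < l < 1 -> p w <> lerp l (p u) (p v).

Lemma edge_segment_free T u v :
  is_triangulation p T -> is_edge_of T [set u; v] -> segment_free u v.
Proof.
move=> hT /andP[/eqP huv2 /existsP[t /andP[ht st]]] w l hl ew.
have hu := subsetP st u (set21 u v); have hv := subsetP st v (set22 u v).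
have huv : u != v by move: huv2; rewrite cards2; case: (u != v).
have [w1 [et hD]] := triangle_through hT ht hu hv huv.
set D := orient (p u) (p v) (p w1) in hD.
have e1 : orient (p u) (p v) (p w) = 0 by rewrite ew orient_lerp orient_aba orient_abb; ring.
have e2 : orient (p v) (p w1) (p w) = (1 - l) * D.
  by rewrite ew orient_lerp orient_aba (orient_rot (p u) (p v) (p w1)) -/D; ring.
have e3 : orient (p w1) (p u) (p w) = l * D.
  rewrite ew orient_lerp orient_abb (orient_rot (p v) (p w1) (p u)).
  by rewrite (orient_rot (p u) (p v) (p w1)) -/D; ring.
have q : 0 < D * D := sqr_gt0 hD.
case/andP: hl => l0 l1.
have : w \in [set u; v; w1].
  rewrite et in ht; apply: (triangle_vertex hT ht hD); rewrite -/D ?e1 ?e2 ?e3.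
  - by rewrite mul0r.
  - by rewrite -mulrA; apply: mulr_ge0; lra.
  - by rewrite -mulrA; apply: mulr_ge0; lra.
case/in_set3P => ew'; rewrite ew' in e1 e2 e3.
- move: e2; rewrite (orient_rot (p u) (p v) (p w1)) -/D => e2.
  have : l * D = 0 by rewrite -[X in X = _]/(l * D); lra.
  by move/eqP; rewrite mulf_eq0 (negPf hD) orbF => /eqP; lra.
- move: e3; rewrite (orient_rot (p v) (p w1) (p u)) (orient_rot (p u) (p v) (p w1)) -/D => e3.
  have : (1 - l) * D = 0 by lra.
  by move/eqP; rewrite mulf_eq0 (negPf hD) orbF => /eqP; lra.
- by move: hD; rewrite /D e1 eqxx.
Qed.

Lemma triangles_same_side T a b c w :
  is_triangulation p T -> [set a; b; c] \in T -> [set a; b; w] \in T ->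
  [set a; b; c] != [set a; b; w] ->
  0 < orient (p a) (p b) (p c) * orient (p a) (p b) (p w) -> False.
Proof.
move=> hT h1 h2 hne hpos.
have [hc hw] : orient (p a) (p b) (p c) != 0 /\ orient (p a) (p b) (p w) != 0.
  by split; apply/negP => /eqP e; move: hpos; rewrite e ?mul0r ?mulr0 ltxx.
have half : 0 < (1 / 2 : R) < 1 by rewrite divr_gt0 //= ltr_pdivrMr // mul1r ltr1n.
have eV : det2 (vsub (p b) (p a)) (vsub (p c) (p a)) = orient (p a) (p b) (p c).
  by rewrite /orient /det2 /vsub.
apply: (@overlapping_triangles T a b c a b w (lerp (1/2) (p a) (p b)) (vsub (p c) (p a))
          (1/2) (1/2) hT h1 h2 hne hc hw half erefl half erefl); rewrite eV //.
exact: sqr_gt0.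
Qed.

Definition flipT T a b c d : {set {set 'I_n}} :=
  ((T :\ [set a; b; c]) :\ [set a; b; d]) :|: [set [set a; c; d]; [set b; c; d]].

Lemma flip_removes_edge T a b c d :
  is_triangulation p T -> [set a; b; c] \in T -> [set a; b; d] \in T ->
  orient (p a) (p b) (p c) * orient (p a) (p b) (p d) < 0 ->
  ~~ is_edge_of (flipT T a b c d) [set a; b].
Proof.
move=> hT h1 h2 hcd; apply/negP => /andP[_ /existsP[t /andP[ht hsub]]].
have ha : a \in t by apply: (subsetP hsub); rewrite !inE eqxx.
have hb : b \in t by apply: (subsetP hsub); rewrite !inE eqxx orbT.
have [nc nd] := mul_lt0_neq0 hcd.
have [hab hbc hac] := orient_neq0_distinct nc.
have [_ hbd had] := orient_neq0_distinct nd.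
move: ht; rewrite /flipT !inE => /orP[/andP[ht1 /andP[ht2 ht]]|/orP[/eqP et|/eqP et]].
- have [w [et hw]] := triangle_through hT ht ha hb hab.
  rewrite et in ht1 ht2 ht.
  have [q|q] : 0 < orient (p a) (p b) (p c) * orient (p a) (p b) (p w) \/
               0 < orient (p a) (p b) (p d) * orient (p a) (p b) (p w).
    have := sqr_gt0 nc; have := sqr_gt0 hw; nra.
  + by apply: (triangles_same_side hT h1 ht); rewrite 1?eq_sym.
  + by apply: (triangles_same_side hT h2 ht); rewrite 1?eq_sym.
- by move: hb; rewrite et => /in_set3P [e|e|e]; rewrite e eqxx in hab hbc hbd.
- by move: ha; rewrite et => /in_set3P [e|e|e]; rewrite e eqxx in hab hac had.
Qed.

Lemma closed_quad_vertex T a b c d U :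
  is_triangulation p T -> [set a; b; c] \in T -> [set a; b; d] \in T ->
  0 < orient (p a) (p b) (p c) -> orient (p a) (p b) (p d) < 0 ->
  0 <= orient (p a) (p d) (p U) -> 0 <= orient (p d) (p b) (p U) ->
  0 <= orient (p b) (p c) (p U) -> 0 <= orient (p c) (p a) (p U) ->
  [\/ U = a, U = b, U = c | U = d].
Proof.
move=> hT h1 h2 hc hd a0 a1 a2 a3.
case: (leP 0 (orient (p a) (p b) (p U))) => hab.
  have : U \in [set a; b; c].
    by apply: (triangle_vertex hT h1); rewrite ?gt_eqF // mulr_ge0 // ltW.
  by case/in_set3P => ->; [constructor 1|constructor 2|constructor 3].
have : U \in [set a; b; d].
  apply: (triangle_vertex hT h2); rewrite ?lt_eqF //.
  - by apply: ltW; rewrite nmulr_rgt0.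
  - rewrite (_ : orient (p b) (p d) (p U) = - orient (p d) (p b) (p U)); last first.
      by rewrite /orient; ring.
    by rewrite mulNr -mulrN; apply: mulr_ge0 => //; rewrite oppr_ge0 ltW.
  - rewrite (_ : orient (p d) (p a) (p U) = - orient (p a) (p d) (p U)); last first.
      by rewrite /orient; ring.
    by rewrite mulNr -mulrN; apply: mulr_ge0 => //; rewrite oppr_ge0 ltW.
by case/in_set3P => ->; [constructor 1|constructor 2|constructor 4].
Qed.

Lemma quad_exit_endpoint T a b c d u v U (X : R * R) (lam : R) :
  is_triangulation p T -> [set a; b; c] \in T -> [set a; b; d] \in T ->
  0 < orient (p a) (p b) (p c) -> orient (p a) (p b) (p d) < 0 ->
  convex_quad (p a) (p d) (p b) (p c) ->
  0 < orient (p a) (p d) X -> 0 < orient (p d) (p b) X -> 0 < orient (p b) (p c) X ->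
  0 < orient (p c) (p a) X ->
  segment_free u v -> u != v -> X = lerp lam (p u) (p v) ->
  orient (p u) (p v) (p c) != 0 -> orient (p u) (p v) (p d) != 0 ->
  orient (p u) (p v) (p U) = 0 ->
  (forall s, 0 < s < 1 -> exists2 l', 0 < l' < 1 & lerp s X (p U) = lerp l' (p u) (p v)) ->
  [\/ U = a, U = b | [\/ crossing (p u) (p v) (p a) (p d), crossing (p u) (p v) (p d) (p b),
                         crossing (p u) (p v) (p b) (p c) | crossing (p u) (p v) (p c) (p a)]].
Proof.
move=> hT h1 h2 hc hd hq g0 g1 g2 g3 hNP huv eX nc nd hU hZ.
case: (quad_exit (p U) hq g0 g1 g2 g3).
  case=> a0 a1 a2 a3.
  case: (closed_quad_vertex hT h1 h2 hc hd a0 a1 a2 a3) => e;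
    [by constructor 1|by constructor 2|move: nc|move: nd]; by rewrite -e hU eqxx.
case=> s hs; have [l' hl' eZ] := hZ s hs; case=> [hv|[t ht hside]].
  case: hv => ev; rewrite ev in eZ.
  - by case: (hNP a l' hl').
  - by move: nd; rewrite eZ orient_lerp orient_aba orient_abb !mulr0 addr0 eqxx.
  - by case: (hNP b l' hl').
  - by move: nc; rewrite eZ orient_lerp orient_aba orient_abb !mulr0 addr0 eqxx.
have hpuv : p u != p v by apply/negP => /eqP e; move: nc; rewrite e orient_aab eqxx.
constructor 3.
case: hside => es; rewrite es in eZ.
- by constructor 1; apply: (crossing_of_meet ht hl' hpuv eZ eX); rewrite gt_eqF.
- by constructor 2; apply: (crossing_of_meet ht hl' hpuv eZ eX); rewrite gt_eqF.
- by constructor 3; apply: (crossing_of_meet ht hl' hpuv eZ eX); rewrite gt_eqF.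
- by constructor 4; apply: (crossing_of_meet ht hl' hpuv eZ eX); rewrite gt_eqF.
Qed.

Definition crosses_quad_side (u v a b c d : R * R) :=
  [\/ crossing u v a d, crossing u v d b, crossing u v b c | crossing u v c a].

Lemma quad_cross_pos T a b c d u v :
  is_triangulation p T -> [set a; b; c] \in T -> [set a; b; d] \in T ->
  0 < orient (p a) (p b) (p c) -> orient (p a) (p b) (p d) < 0 ->
  orient (p c) (p d) (p a) * orient (p c) (p d) (p b) < 0 ->
  segment_free u v -> u != v -> crossing (p u) (p v) (p c) (p d) ->
  [set u; v] = [set a; b] \/ crosses_quad_side (p u) (p v) (p a) (p b) (p c) (p d).
Proof.
move=> hT h1 h2 hc hd hcd hfree huv hcr.
have [hq [l /andP[l0 l1] [g0 g1 g2 g3]]] := quad_crossing_point hc hd hcd hcr.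
have [nc nd] := mul_lt0_neq0 hcr.1.
have hZu s : 0 < s < 1 ->
    exists2 l', 0 < l' < 1 & lerp s (lerp l (p u) (p v)) (p u) = lerp l' (p u) (p v).
  by move=> /andP[s0 s1]; exists ((1 - s) * l); [apply/andP; split; nra|apply: lerp_lerpl].
have hZv s : 0 < s < 1 ->
    exists2 l', 0 < l' < 1 & lerp s (lerp l (p u) (p v)) (p v) = lerp l' (p u) (p v).
  by move=> /andP[s0 s1]; exists ((1 - s) * l + s); [apply/andP; split; nra|apply: lerp_lerpr].
have := quad_exit_endpoint hT h1 h2 hc hd hq g0 g1 g2 g3 hfree huv erefl nc nd (orient_aba _ _) hZu.
have := quad_exit_endpoint hT h1 h2 hc hd hq g0 g1 g2 g3 hfree huv erefl nc nd (orient_abb _ _) hZv.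
case=> [ev|ev|cv] [eu|eu|cu]; try by right.
- by move: huv; rewrite eu ev eqxx.
- by left; rewrite eu ev setUC.
- by left; rewrite eu ev.
- by move: huv; rewrite eu ev eqxx.
Qed.

Lemma quad_cross T a b c d u v :
  is_triangulation p T -> [set a; b; c] \in T -> [set a; b; d] \in T ->
  orient (p a) (p b) (p c) * orient (p a) (p b) (p d) < 0 ->
  orient (p c) (p d) (p a) * orient (p c) (p d) (p b) < 0 ->
  segment_free u v -> u != v -> crossing (p u) (p v) (p c) (p d) ->
  [set u; v] = [set a; b] \/ crosses_quad_side (p u) (p v) (p a) (p b) (p c) (p d).
Proof.
move=> hT h1 h2 h12 hcd hNP huv hcr.
have [nc nd] := mul_lt0_neq0 h12.
case: (ltrgtP 0 (orient (p a) (p b) (p c))) => hc; last by move: nc; rewrite -hc eqxx.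
- apply: (quad_cross_pos hT h1 h2 hc _ hcd hNP huv hcr).
  by move: h12; rewrite pmulr_rlt0.
- have hd : 0 < orient (p a) (p b) (p d) by move: h12; rewrite nmulr_rlt0.
  have hdc : orient (p d) (p c) (p a) * orient (p d) (p c) (p b) < 0.
    by rewrite (orient_swap12 (p c) (p d) (p a)) (orient_swap12 (p c) (p d) (p b)) mulrNN.
  case: (quad_cross_pos hT h2 h1 hd hc hdc hNP huv (crossing_swapr hcr)) => [->|]; first by left.
  case=> h; right.
  + by constructor 4; apply: crossing_swapr.
  + by constructor 3; apply: crossing_swapr.
  + by constructor 2; apply: crossing_swapr.
  + by constructor 1; apply: crossing_swapr.
Qed.

Lemma edge_of_triangle T t x y : t \in T -> x \in t -> y \in t -> x != y -> is_edge_of T [set x; y].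
Proof.
move=> ht hx hy hxy; rewrite /is_edge_of cards2 hxy /=.
apply/existsP; exists t; rewrite ht /=; apply/subsetP => z; rewrite !inE => /orP[]/eqP ->//.
Qed.

Lemma set2_eqP (x y c d : 'I_n) : c != d -> [set x; y] = [set c; d] ->
  (x = c /\ y = d) \/ (x = d /\ y = c).
Proof.
move=> hcd e.
have hx : x \in [set c; d] by rewrite -e !inE eqxx.
have hy : y \in [set c; d] by rewrite -e !inE eqxx orbT.
have hc : c \in [set x; y] by rewrite e !inE eqxx.
have hd : d \in [set x; y] by rewrite e !inE eqxx orbT.
move: hx hy hc hd; rewrite !inE => /orP[]/eqP ex /orP[]/eqP ey; subst.
- by rewrite !orbb => _ /eqP e1; rewrite e1 eqxx in hcd.
- by left.
- by right.
- by rewrite !orbb => /eqP e1; rewrite e1 eqxx in hcd.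
Qed.

Lemma sub_triangle_edge (z : {set 'I_n}) w c d : z \subset [set w; c; d] -> #|z| = 2 -> c != d ->
  [\/ z \subset [set w; c], z \subset [set w; d] | z = [set c; d]].
Proof.
move=> hs hz hcd.
case: (boolP (z \subset [set w; c])) => s1; first by constructor 1.
case: (boolP (z \subset [set w; d])) => s2; first by constructor 2.
constructor 3.
have [x1 hx1 nx1] := subsetPn s1; have [x2 hx2 nx2] := subsetPn s2.
have ex1 : x1 = d.
  move: (subsetP hs x1 hx1) nx1; rewrite !inE.
  by case/orP=> [/orP[]|] /eqP -> //; rewrite eqxx ?orbT.
have ex2 : x2 = c.
  move: (subsetP hs x2 hx2) nx2; rewrite !inE.
  by case/orP=> [/orP[]|] /eqP -> //; rewrite eqxx ?orbT.
subst; apply/esym/eqP; rewrite eqEcard hz cards2 hcd leqnn andbT.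
by apply/subsetP => x; rewrite !inE => /orP[]/eqP ->.
Qed.

Lemma edge_after_flip T a b c d z :
  is_triangulation p T -> [set a; b; c] \in T -> [set a; b; d] \in T ->
  orient (p a) (p b) (p c) * orient (p a) (p b) (p d) < 0 ->
  is_edge_of (flipT T a b c d) z -> z = [set c; d] \/ (is_edge_of T z /\ z != [set a; b]).
Proof.
move=> hT h1 h2 hcd hz.
have hg := flip_removes_edge hT h1 h2 hcd.
have hne : z != [set a; b] by apply: contra hg => /eqP <-.
have [nc nd] := mul_lt0_neq0 hcd.
have hcd' : c != d.
  by apply/negP => /eqP e; move: hcd; rewrite e ltNge -expr2 sqr_ge0.
move: (hz) => /andP[/eqP hc2 /existsP[t /andP[ht hsub]]].
have from_triangle : forall w, w \in [set a; b] -> z \subset [set w; c; d] ->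
    z = [set c; d] \/ (is_edge_of T z /\ z != [set a; b]).
  move=> w hw hs.
  have hwc : [set w; c] \subset [set a; b; c].
    by apply/subsetP => x; move: hw; rewrite !inE => /orP[]/eqP-> /orP[]/eqP->; rewrite eqxx ?orbT.
  have hwd : [set w; d] \subset [set a; b; d].
    by apply/subsetP => x; move: hw; rewrite !inE => /orP[]/eqP-> /orP[]/eqP->; rewrite eqxx ?orbT.
  case: (sub_triangle_edge hs hc2 hcd') => [s1|s2|->]; [right|right|by left].
  - split=> //; rewrite /is_edge_of hc2 /=; apply/existsP; exists [set a; b; c].
    by rewrite h1 (subset_trans s1 hwc).
  - split=> //; rewrite /is_edge_of hc2 /=; apply/existsP; exists [set a; b; d].
    by rewrite h2 (subset_trans s2 hwd).
move: ht; rewrite /flipT !inE => /orP[/andP[_ /andP[_ ht]]|/orP[/eqP et|/eqP et]].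
- right; split=> //; rewrite /is_edge_of hc2 /=; apply/existsP; exists t; by rewrite ht.
- by apply: (from_triangle a); rewrite ?inE ?eqxx // -et.
- by apply: (from_triangle b); rewrite ?inE ?eqxx ?orbT // -et.
Qed.

Lemma set2_neq (w1 w2 x y : 'I_n) : w2 \notin [set x; y] -> [set w1; w2] != [set x; y].
Proof. by apply: contra => /eqP <-; rewrite !inE eqxx orbT. Qed.

Lemma share_tri_in T t w1 w2 x y :
  t \in T -> w1 \in t -> w2 \in t -> x \in t -> y \in t ->
  [set w1; w2] != [set x; y] -> share_tri T [set w1; w2] [set x; y].
Proof.
move=> ht h1 h2 h3 h4 hne; rewrite /share_tri hne /=; apply/existsP; exists t.
by rewrite ht /=; apply/andP; split; apply/subsetP => z; rewrite !inE => /orP[]/eqP ->.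
Qed.

Lemma flip_step_edge T e g T' : flip_step p T e g T' -> is_edge_of T e.
Proof.
case=> a [b [c [d [-> _ [h1 _] [k1 _] _]]]].
have [hab _ _] := orient_neq0_distinct (mul_lt0_neq0 k1).1.
by apply: (edge_of_triangle h1); rewrite ?inE ?eqxx ?orbT.
Qed.

Definition meets_segment u v (z : {set 'I_n}) : Prop :=
  z = [set u; v] \/ exists c d, z = [set c; d] /\ crossing (p u) (p v) (p c) (p d).

Lemma flip_meets_neighbour T a b c d u v : is_triangulation p T ->
  [set a; b; c] \in T -> [set a; b; d] \in T ->
  orient (p a) (p b) (p c) * orient (p a) (p b) (p d) < 0 ->
  orient (p c) (p d) (p a) * orient (p c) (p d) (p b) < 0 ->
  segment_free u v -> u != v -> meets_segment u v [set c; d] ->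
  exists2 w, is_edge_of T w /\ meets_segment u v w &
             w = [set a; b] \/ share_tri T w [set a; b].
Proof.
move=> hT h1 h2 k1 k2 hfree huv.
have [nc nd] := mul_lt0_neq0 k1.
have [hab hbc hac] := orient_neq0_distinct nc.
have [_ hbd had] := orient_neq0_distinct nd.
have hcd : c != d by apply/negP => /eqP e; move: k1; rewrite e ltNge -expr2 sqr_ge0.
have eab : is_edge_of T [set a; b] by apply: (edge_of_triangle h1); rewrite ?inE ?eqxx ?orbT.
case=> [euv|[c1 [d1 [e1 hcr]]]].
  exists [set a; b]; last by left.
  split=> //; right; exists a, b; split=> //.
  case: (set2_eqP hcd (esym euv)) => [[-> ->]|[-> ->]]; first by split.
  by apply: crossing_swapl; split.
have {}hcr : crossing (p u) (p v) (p c) (p d).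
  by case: (set2_eqP hcd (esym e1)) hcr => [[-> ->]|[-> ->]] //; apply: crossing_swapr.
case: (quad_cross hT h1 h2 k1 k2 hfree huv hcr) => [euv|].
  by exists [set a; b]; [split=> //; left|left].
have nd' : d \notin [set a; b] by rewrite !inE negb_or eq_sym had eq_sym hbd.
have nc' : c \notin [set a; b] by rewrite !inE negb_or eq_sym hac eq_sym hbc.
have share_c w : w \in [set a; b] -> share_tri T [set w; c] [set a; b].
  move=> hw; apply: (share_tri_in h1) (set2_neq _ nc'); rewrite ?inE ?eqxx ?orbT //.
  by move: hw; rewrite !inE => ->.
have share_d w : w \in [set a; b] -> share_tri T [set w; d] [set a; b].
  move=> hw; apply: (share_tri_in h2) (set2_neq _ nd'); rewrite ?inE ?eqxx ?orbT //.
  by move: hw; rewrite !inE => ->.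
case=> hs.
- exists [set a; d]; last by right; apply: share_d; rewrite !inE eqxx.
  by split; [apply: (edge_of_triangle h2); rewrite ?inE ?eqxx ?orbT|right; exists a, d].
- exists [set b; d]; last by right; apply: share_d; rewrite !inE eqxx orbT.
  split; [apply: (edge_of_triangle h2); rewrite ?inE ?eqxx ?orbT //|right; exists b, d].
  by split=> //; apply: crossing_swapr.
- exists [set b; c]; last by right; apply: share_c; rewrite !inE eqxx orbT.
  by split; [apply: (edge_of_triangle h1); rewrite ?inE ?eqxx ?orbT|right; exists b, c].
- exists [set a; c]; last by right; apply: share_c; rewrite !inE eqxx.
  split; [apply: (edge_of_triangle h1); rewrite ?inE ?eqxx ?orbT //|right; exists a, c].
  by split=> //; apply: crossing_swapr.
Qed.
End Triangulations.

Lemma connect_dpath_in n (F : seq (flip n)) (Ts : nat -> {set {set 'I_n}})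
    (C : {set 'I_(size F)}) (i h : 'I_(size F)) :
  is_component Ts C -> i \in C -> connect (adj Ts) i h -> dpath_in Ts C i h.
Proof.
move=> [x eC] iC /connectP[s hs hlast]; exists s; split; [exact: hs|exact/esym|].
apply/allP => y hy; move: iC; rewrite eC !inE => xi; apply: connect_trans xi _.
apply: connect_sub (path_connect hs hy) => y1 y2 hy12.
by apply: connect1; rewrite /wadj hy12.
Qed.

Section Reachability.
Variables (R : realFieldType) (n : nat) (p : 'I_n -> R * R).
Variables (F : seq (flip n)) (Ts : nat -> {set {set 'I_n}}).
Hypothesis triangulationsP : forall q : 'I_(size F), is_triangulation p (Ts q).
Hypothesis flipsP : forall q : 'I_(size F), flip_step p (Ts q) (eps q) (phi q) (Ts q.+1).
Variables (i : 'I_(size F)) (u v : 'I_n).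
Hypothesis eps_i : eps i = [set u; v].

Definition born_reachable (t : nat) (z : {set 'I_n}) : Prop :=
  exists s : 'I_(size F), [/\ connect (adj Ts) i s, (s < t)%N, phi s = z &
    forall q : 'I_(size F), (s < q)%N -> (q < t)%N -> eps q != z].

Lemma born_reachable_connect (t : 'I_(size F)) w : born_reachable t w ->
  w = eps t \/ share_tri (Ts t) w (eps t) -> connect (adj Ts) i t.
Proof.
move=> [s [cs st <- hq]] hsh; apply: connect_trans cs (connect1 _).
rewrite /adj st /=; apply/andP; split; first by case: hsh => ->; rewrite ?eqxx ?orbT.
by apply/forallP => q; apply/implyP => /andP[q1 q2]; exact: hq.
Qed.

Lemma uv_edge : is_edge_of (Ts i) [set u; v].
Proof. by rewrite -eps_i; apply: flip_step_edge (flipsP i). Qed.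

Lemma u_neq_v : u != v.
Proof. by move: uv_edge => /andP[]; rewrite cards2; case: (u != v). Qed.

Lemma born_reachable_first z : is_edge_of (Ts i.+1) z -> meets_segment p u v z ->
  born_reachable i.+1 z.
Proof.
have [a [b [c [d [ea ephi [h1 h2] [k1 _] ->]]]]] := flipsP i.
move=> hz mz; case: (edge_after_flip (triangulationsP i) h1 h2 k1 hz) => [ez|[hz' hne]].
  by exists i; split=> //; [rewrite ephi ez|move=> q q1; rewrite ltnS leqNgt q1].
exfalso; case: mz => [ez|[c' [d' [ez hcr]]]]; first by move: hne; rewrite ez -eps_i ea eqxx.
by rewrite ez in hz'; apply: edges_not_crossing (triangulationsP i) uv_edge hz' hcr.
Qed.

Lemma born_reachable_step (t : 'I_(size F)) :
  (forall z, is_edge_of (Ts t) z -> meets_segment p u v z -> born_reachable t z) ->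
  forall z, is_edge_of (Ts t.+1) z -> meets_segment p u v z -> born_reachable t.+1 z.
Proof.
move=> IH z; have [a [b [c [d [ea ephi [h1 h2] [k1 k2] ->]]]]] := flipsP t.
have hT := triangulationsP t.
move=> hz mz; case: (edge_after_flip hT h1 h2 k1 hz) => [ez|[hz' hne]].
  exists t; split=> //; [|by rewrite ephi ez|by move=> q q1; rewrite ltnS leqNgt q1].
  have hfree := edge_segment_free (triangulationsP i) uv_edge.
  rewrite ez in mz; have [w [hw mw] hadj] := flip_meets_neighbour hT h1 h2 k1 k2 hfree u_neq_v mz.
  by apply: born_reachable_connect (IH w hw mw) _; rewrite ea.
have [s [cs st hphi hq]] := IH z hz' mz.
exists s; split=> //; first exact: ltnW.
move=> q q1; rewrite ltnS leq_eqVlt => /orP[/eqP/val_inj ->|]; last exact: hq.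
by rewrite ea eq_sym.
Qed.

Lemma born_reachable_edges (t : nat) : (i < t)%N -> (t <= size F)%N ->
  forall z, is_edge_of (Ts t) z -> meets_segment p u v z -> born_reachable t z.
Proof.
elim: t => [//|t IH]; rewrite ltnS leq_eqVlt => /orP[/eqP <-|it] tF.
  exact: born_reachable_first.
by apply: (@born_reachable_step (Ordinal tF)); apply: IH => //; exact: ltnW.
Qed.
End Reachability.

Theorem lemma5 (R : realFieldType) (n : nat) (p : 'I_n -> R * R)
    (Tinit Tfinal : {set {set 'I_n}}) (k : nat)
    (F : seq (flip n)) (Ts : nat -> {set {set 'I_n}})
    (C : {set 'I_(size F)}) (i h : 'I_(size F)) :
  injective p ->
  is_triangulation p Tinit -> is_triangulation p Tfinal ->
  normalized p F Ts Tinit Tfinal k ->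
  is_component Ts C ->
  i \in C -> h \in C -> (i < h)%N ->
  eps i = eps h ->
  dpath_in Ts C i h.
Proof.
move=> _ _ _ [[_ [_ triangsP flips] _ _] _] compC iC _ ih heps.
have triP (q : 'I_(size F)) : is_triangulation p (Ts q) by apply: triangsP; exact: ltnW.
have flipP (q : 'I_(size F)) : flip_step p (Ts q) (eps q) (phi q) (Ts q.+1) by exact: flips.
have [u [v [_ [_ [e_i _ _ _ _]]]]] := flipP i.
apply: connect_dpath_in compC iC _.
have hmeets : meets_segment p u v (eps h) by left; rewrite -heps.
have hedge := flip_step_edge (flipP h).
have := born_reachable_edges triP flipP e_i ih (ltnW (ltn_ord h)) hedge hmeets.
by move/born_reachable_connect; apply; left.
Qed.
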